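(* (1) $\mathrm{Pr}(\mathrm{Fig}(T^\phi)\setminus\{T\})=m_T\setminus(\mathcal S_1\cup\{T^\phi\})$. (2) $\mathrm{Pr}(\mathrm{Fig}(T^{\phi^2})\setminus\{T\})=m_T\setminus(\mathcal S_1\cup\{T^{\phi^2}\})$.
   Context: Let $q$ be a prime power, $\mathbb{F}_{q^3}^*=\mathbb{F}_{q^3}\setminus\{0\}$. Points of $\mathrm{PG}(2,q^3)$ have homogeneous coordinates $(x,y,z)$ and lines $[a,b,c]$. Let $\phi$ be the collineation $(x,y,z)\mapsto(z^q,x^q,y^q)$ (on lines $[d,e,f]\mapsto[f^q,d^q,e^q]$). A point has Type II (resp. III) if its $\phi$-orbit is three collinear (resp. non-collinear) points; a line has Type III if its $\phi$-orbit is three non-concurrent lines. For a Type III point $X$, the Fig-block is $\mathrm{Fig}(X)=\mathcal E_X\cup\mathcal F_X$, where $\mathcal E_X$ is the set of Type II points on the line $X^\phi X^{\phi^2}$ and $\mathcal F_X=\{\ell^\phi\cap\ell^{\phi^2}:\ell\text{ a Type III line through }X\}$. Let $T=(0,0,1)$, $T^\phi=(1,0,0)$, $T^{\phi^2}=(0,1,0)$ (all Type III), and $m_T=T^\phi T^{\phi^2}$ the line $[0,0,1]$. For a point $P\neq T$, $\mathrm{Pr}(P)=TP\cap m_T$, applied elementwise to sets of points not containing $T$. Let $\mathcal S_1=\{(x,x^q,0):x\in\mathbb{F}_{q^3}^*\}\subset m_T$. *)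

From HB Require Import structures.
From mathcomp Require Import all_boot all_order all_algebra all_field.
Set Implicit Arguments. Unset Strict Implicit. Unset Printing Implicit Defensive.
Import GRing.Theory.
Local Open Scope ring_scope.

Section PG.
Variable F : fieldType.

(* homogeneous coordinates (x,y,z) of points, or [a,b,c] of lines *)
Definition trip := (F * F * F)%type.
Definition tx (u : trip) := u.1.1.
Definition ty (u : trip) := u.1.2.
Definition tz (u : trip) := u.2.

Definition nz (u : trip) : Prop := u <> (0, 0, 0).
Definition smul (c : F) (u : trip) : trip := (c * tx u, c * ty u, c * tz u).

Definition peq (u v : trip) : Prop :=
  nz u /\ nz v /\ exists c : F, c != 0 /\ v = smul c u.

Definition incid (P l : trip) : Prop :=
  tx l * tx P + ty l * ty P + tz l * tz P = 0.

(* the collineation phi : (x,y,z) |-> (z^q,x^q,y^q); the same formula gives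
   its action on lines [d,e,f] |-> [f^q,d^q,e^q] *)
Definition phi (q : nat) (u : trip) : trip := (tz u ^+ q, tx u ^+ q, ty u ^+ q).

Definition collinear3 (A B C : trip) : Prop :=
  exists l, nz l /\ incid A l /\ incid B l /\ incid C l.
Definition concurrent3 (l m n : trip) : Prop :=
  exists P, nz P /\ incid P l /\ incid P m /\ incid P n.

Definition typeII (q : nat) (X : trip) : Prop :=
  nz X /\ ~ peq X (phi q X) /\ ~ peq (phi q X) (phi q (phi q X))
  /\ ~ peq X (phi q (phi q X)) /\ collinear3 X (phi q X) (phi q (phi q X)).
Definition typeIII (q : nat) (X : trip) : Prop :=
  nz X /\ ~ collinear3 X (phi q X) (phi q (phi q X)).
Definition typeIIIline (q : nat) (l : trip) : Prop :=
  nz l /\ ~ concurrent3 l (phi q l) (phi q (phi q l)).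

Definition EX (q : nat) (X P : trip) : Prop :=
  typeII q P /\ exists l, nz l /\ incid (phi q X) l /\ incid (phi q (phi q X)) l
                           /\ incid P l.
Definition FX (q : nat) (X P : trip) : Prop :=
  nz P /\ exists l, typeIIIline q l /\ incid X l
                    /\ incid P (phi q l) /\ incid P (phi q (phi q l)).
Definition Fig (q : nat) (X P : trip) : Prop := EX q X P \/ FX q X P.

Definition T : trip := (0, 0, 1).
Definition mT : trip := (0, 0, 1). (* the line [0,0,1] = T^phi T^phi^2 *)

(* Q is the point Pr(P) = TP /\ m_T  (for P <> T) *)
Definition Pr (P Q : trip) : Prop :=
  nz Q /\ incid Q mT /\
  exists l, nz l /\ incid T l /\ incid P l /\ incid Q l.

Definition S1 (q : nat) (Q : trip) : Prop :=
  exists x : F, x != 0 /\ peq Q (x, x ^+ q, 0).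

Definition PrFigMinusT (q : nat) (X Q : trip) : Prop :=
  exists P, Fig q X P /\ ~ peq P T /\ Pr P Q.

Definition mTminus (q : nat) (Y Q : trip) : Prop :=
  nz Q /\ incid Q mT /\ ~ S1 q Q /\ ~ peq Q Y.

End PG.

From HB Require Import structures.
From mathcomp Require Import all_boot all_order all_algebra all_field.
From mathcomp Require Import cyclic ring zify.
Set Implicit Arguments. Unset Strict Implicit. Unset Printing Implicit Defensive.
Import GRing.Theory.
Local Open Scope ring_scope.

(* Projecting from T identifies the points of m_T other than T^phi (resp. T^phi^2)
   with the (x : y : 0) with y != 0 (resp. x != 0); both sides of each identity
   turn out to be the points with N(x) != N(y), N being the norm of F_{q^3} over
   F_q.  On the right this is Hilbert's Theorem 90: (x : y : 0) lies in S_1 iff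
   y / x is a (q-1)-th power, iff N(x) = N(y).  On the left, E_X projects to the
   other vertex of m_T, where N(x) != N(y) trivially.  For a Type III line l
   through X, the line l^phi^2 (resp. l^phi) passes through T, so it is the line
   TP for P = l^phi /\ l^phi^2; if N(x) = N(y) it contains the phi-fixed point
   (t, t^q, t^q^2) above (x : y : 0), hence so does every line of the orbit of l,
   which is impossible.  Conversely, when N(x) != N(y), the line l through X with
   l^phi^2 (resp. l^phi) joining T to (x : y : 0) has an orbit whose determinant
   is N(y) - N(x) != 0. *)

Section Projective.
Variable F : fieldType.

Lemma incidE (x y z a b c : F) : incid (x, y, z) (a, b, c) = (a * x + b * y + c * z = 0).
Proof. by []. Qed.

Lemma smulE (c x y z : F) : smul c (x, y, z) = (c * x, c * y, c * z).
Proof. by []. Qed.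

Lemma phiE (q : nat) (x y z : F) : phi q (x, y, z) = (z ^+ q, x ^+ q, y ^+ q).
Proof. by []. Qed.

Lemma nz3E (a b c : F) : nz (a, b, c) <-> (a != 0) || (b != 0) || (c != 0).
Proof.
split=> [|abc [a0 b0 c0]]; last by rewrite a0 b0 c0 eqxx in abc.
by apply: contra_notT; rewrite !negb_or !negbK => /andP[/andP[/eqP-> /eqP->] /eqP->].
Qed.

Lemma peq_refl (u : trip F) : nz u -> peq u u.
Proof.
by case: u => [[a b] c] nzu; split=> //; split=> //; exists 1; rewrite oner_neq0 smulE !mul1r.
Qed.

Lemma peq_T (x y z : F) :
  nz (x, y, z) -> ~ peq (x, y, z) (T F) <-> (x != 0) || (y != 0).
Proof.
move=> /nz3E nzP; split=> [nT | xy [_ [_ [c [c0]]]]].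
  have [x0 | //] := eqVneq x 0; have [y0 | //] := eqVneq y 0.
  rewrite x0 y0 eqxx /= in nzP nT; exfalso; apply: nT.
  split; first by apply/nz3E; rewrite nzP !orbT.
  split; first by apply/nz3E; rewrite oner_neq0 !orbT.
  exists z^-1; rewrite invr_eq0 nzP smulE.
  by split=> //; rewrite !mulr0 mulVf.
rewrite /T smulE => -[/esym/eqP + /esym/eqP + _].
by rewrite !mulf_eq0 (negbTE c0) /= => /eqP x0 /eqP y0; rewrite x0 y0 eqxx in xy.
Qed.

Lemma peq_mT (x y u v : F) : (x != 0) || (y != 0) -> (u != 0) || (v != 0) ->
  x * v = y * u -> peq (x, y, 0) (u, v, 0).
Proof.
move=> xy uv xv_yu; split; first by apply/nz3E; rewrite xy.
split; first by apply/nz3E; rewrite uv.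
have [x0 | xn] := eqVneq x 0.
  rewrite x0 eqxx /= in xy; move/eqP: xv_yu.
  rewrite x0 mul0r eq_sym mulf_eq0 (negbTE xy) => /eqP u0.
  rewrite u0 eqxx /= in uv.
  exists (v / y); rewrite smulE u0 !mulr0 divfK //.
  by split=> //; rewrite mulf_neq0 ?invr_eq0.
have un : u != 0.
  apply: contraTneq uv => u0; move/eqP: xv_yu.
  by rewrite u0 mulr0 mulf_eq0 (negbTE xn) /= => /eqP ->; rewrite eqxx.
exists (u / x); rewrite smulE mulr0 divfK //.
split; first by rewrite mulf_neq0 ?invr_eq0.
by congr (_, _, _); rewrite mulrAC [u * y]mulrC -xv_yu [x * v]mulrC mulfK.
Qed.

Lemma peq_mT_cross (x y u v : F) : peq (x, y, 0) (u, v, 0) -> x * v = y * u.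
Proof. by case=> [_ [_ [c [_]]]]; rewrite smulE => -[-> -> _]; ring. Qed.

Lemma kernel2_proportional (a b x y u v : F) : (a != 0) || (b != 0) ->
  a * x + b * y = 0 -> a * u + b * v = 0 -> x * v = y * u.
Proof.
move=> ab hx hu; apply/eqP; rewrite -subr_eq0.
have ha : a * (x * v - y * u) = v * (a * x + b * y) - y * (a * u + b * v) by ring.
have hb : b * (x * v - y * u) = x * (a * u + b * v) - u * (a * x + b * y) by ring.
rewrite hx hu !mulr0 subrr in ha hb.
by case/orP: ab => ab; [move/eqP: ha | move/eqP: hb]; rewrite mulf_eq0 (negbTE ab).
Qed.

Lemma Pr_proj (x y z : F) (Q : trip F) : (x != 0) || (y != 0) ->
  Pr (x, y, z) Q <-> peq (x, y, 0) Q.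
Proof.
move=> xy; split=> [|[_ [nzQ [c [_ eQ]]]]].
  case: Q => [[u v] w] [/nz3E nzQ [+ [[[l1 l2] l3] [/nz3E nzl [+ [+ +]]]]]].
  rewrite !incidE !mul0r !add0r mul1r => w0; rewrite !mulr0 !add0r mulr1 => l30.
  rewrite w0 l30 !mulr0 mul0r !addr0 => hP hQ.
  rewrite w0 eqxx orbF in nzQ; rewrite l30 eqxx orbF in nzl.
  by apply: peq_mT => //; apply: (kernel2_proportional nzl).
rewrite eQ smulE mulr0 in nzQ *; split=> //; split; first by rewrite incidE; ring.
exists (y, - x, 0); split; first by apply/nz3E; rewrite oppr_eq0 eqxx /= orbF orbC.
by rewrite !incidE; do !split; ring.
Qed.

Definition det3 (l m n : trip F) : F :=
  tx l * (ty m * tz n - tz m * ty n) - ty l * (tx m * tz n - tz m * tx n)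
  + tz l * (tx m * ty n - ty m * tx n).

Lemma det3_concurrent (l m n : trip F) : concurrent3 l m n -> det3 l m n = 0.
Proof.
move: l m n => [[l1 l2] l3] [[m1 m2] m3] [[n1 n2] n3].
case=> [[[x y] z] [/nz3E nzP]]; rewrite !incidE => -[hl [hm hn]].
rewrite /det3 /tx /ty /tz /=; set d := (X in X = 0).
(* [d * P = adj M * (M * P)] for the matrix [M] with rows [l], [m], [n], and [M * P = 0]. *)
have dx : d * x = 0.
  transitivity ((m2 * n3 - m3 * n2) * (l1 * x + l2 * y + l3 * z)
    - (l2 * n3 - l3 * n2) * (m1 * x + m2 * y + m3 * z)
    + (l2 * m3 - l3 * m2) * (n1 * x + n2 * y + n3 * z)); first by rewrite /d; ring.
  by rewrite hl hm hn; ring.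
have dy : d * y = 0.
  transitivity (- (m1 * n3 - m3 * n1) * (l1 * x + l2 * y + l3 * z)
    + (l1 * n3 - l3 * n1) * (m1 * x + m2 * y + m3 * z)
    - (l1 * m3 - l3 * m1) * (n1 * x + n2 * y + n3 * z)); first by rewrite /d; ring.
  by rewrite hl hm hn; ring.
have dz : d * z = 0.
  transitivity ((m1 * n2 - m2 * n1) * (l1 * x + l2 * y + l3 * z)
    - (l1 * n2 - l2 * n1) * (m1 * x + m2 * y + m3 * z)
    + (l1 * m2 - l2 * m1) * (n1 * x + n2 * y + n3 * z)); first by rewrite /d; ring.
  by rewrite hl hm hn; ring.
apply/eqP; case/orP: nzP => [/orP[] | ] nzP;
  [move/eqP: dx | move/eqP: dy | move/eqP: dz]; by rewrite mulf_eq0 (negbTE nzP) orbF.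
Qed.

Lemma typeIIIline_det (q : nat) (l : trip F) :
  det3 l (phi q l) (phi q (phi q l)) != 0 -> typeIIIline q l.
Proof.
move=> d0; split; last by move/det3_concurrent/eqP; rewrite (negbTE d0).
by move=> l0; move: d0; rewrite l0 /det3 !mul0r subrr addr0 eqxx.
Qed.

End Projective.

Lemma finField_prim_root (F : finFieldType) : exists z : F, #|F|.-1.-primitive_root z.
Proof.
have n_gt0 : (0 < #|F|.-1)%N by rewrite -ltnS prednK ?finNzRing_gt1 // ltnW ?finNzRing_gt1.
have unity_units : all #|F|.-1.-unity_root (enum [pred x : F | x != 0]).
  apply/allP => x; rewrite mem_enum inE unity_rootE => x0; apply/eqP.
  apply: (mulIf x0); rewrite mul1r -exprSr prednK ?expf_card //.
  exact: ltnW (finNzRing_gt1 F).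
have [|z _ prim_z] := hasP (has_prim_root n_gt0 unity_units (enum_uniq _) _).
  by rewrite -cardE (cardC1 0).
by exists z.
Qed.

Section CubicExtension.
Variables (F : finFieldType) (q : nat).
Hypothesis q_pchar : [pchar F].-nat q.
Hypothesis card_F : #|F| = (q ^ 3)%N.

Lemma q_gt1 : (1 < q)%N.
Proof. by move: (finNzRing_gt1 F); rewrite card_F; case: q => [|[]]. Qed.

Let q_gt0 : (0 < q)%N := ltnW q_gt1.

Lemma frobD (x y : F) : (x + y) ^+ q = x ^+ q + y ^+ q.
Proof. exact: exprDn_pchar. Qed.

Lemma frobN (x : F) : (- x) ^+ q = - x ^+ q.
Proof. exact: exprNn_pchar. Qed.

Lemma frob3 (x : F) : x ^+ q ^+ q ^+ q = x.
Proof.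
have q3 : (q * (q * q))%N = #|F| by rewrite card_F !expnS expn0 muln1.
by rewrite -!exprM q3 expf_card.
Qed.

Lemma frob_eq0 (x : F) : (x ^+ q == 0) = (x == 0).
Proof. by rewrite expf_eq0 q_gt0. Qed.

Lemma frob0 : (0 : F) ^+ q = 0.
Proof. by rewrite expr0n gtn_eqF. Qed.

Definition normq (x : F) : F := x * x ^+ q * x ^+ q ^+ q.

Lemma normqM (x y : F) : normq (x * y) = normq x * normq y.
Proof. by rewrite /normq !exprMn; ring. Qed.

Lemma normqN (x : F) : normq (- x) = - normq x.
Proof. by rewrite /normq !frobN; ring. Qed.

Lemma normq_frob (x : F) : normq (x ^+ q) = normq x.
Proof. by rewrite /normq frob3; ring. Qed.

Lemma normq0 : normq 0 = 0.
Proof. by rewrite /normq !mul0r. Qed.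

Lemma normq_eq0 (x : F) : (normq x == 0) = (x == 0).
Proof. by rewrite /normq !mulf_eq0 !frob_eq0 !orbb. Qed.

Lemma normq_eq1 (e : F) : normq e = 1 -> exists2 t, t != 0 & t ^+ q = e * t.
Proof.
(* With [e = z ^+ i] for a generator [z] of the units, [N(e) = 1] forces
   [q - 1 %| i], and [t = z ^+ (i %/ (q - 1))] satisfies [t ^+ q = z ^+ i * t]. *)
move=> Ne; have [z prim_z] := finField_prim_root F.
have e0 : e != 0 by rewrite -normq_eq0 Ne oner_neq0.
have eF : e ^+ #|F|.-1 = 1.
  by apply: (mulIf e0); rewrite mul1r -exprSr prednK ?expf_card // ltnW ?finNzRing_gt1.
have [[i _] /= ei] := prim_rootP prim_z eF.
pose m := (1 + q + q * q)%N.
have cardE : #|F|.-1 = (q.-1 * m)%N.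
  by rewrite card_F /m; case: q q_gt1 => // r _ /=; nia.
have dvd_i : (q.-1 %| i)%N.
  have : (#|F|.-1 %| i * m)%N.
    by rewrite (prim_order_dvd prim_z) exprM -ei /m !exprD expr1 exprM -Ne.
  by rewrite cardE dvdn_pmul2r.
exists (z ^+ (i %/ q.-1)).
  by rewrite expf_neq0 // (prim_root_eq0 prim_z) -lt0n (prim_order_gt0 prim_z).
rewrite ei -exprM -exprD; set d := (i %/ q.-1)%N.
by rewrite -(prednK q_gt0) mulnS addnC /d divnK.
Qed.

Lemma hilbert90 (x y : F) : (x != 0) || (y != 0) ->
  (exists2 t, t != 0 & x * t ^+ q = y * t) <-> normq x = normq y.
Proof.
move=> xy; split=> [[t t0 xt] | Nxy].
  apply: (mulIf (_ : normq t != 0)); first by rewrite normq_eq0.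
  by rewrite -[normq t in LHS]normq_frob -!normqM xt.
have Nx0 : normq x != 0.
  by move: xy; rewrite -(normq_eq0 x) -(normq_eq0 y) -Nxy orbb.
have x0 : x != 0 by rewrite -normq_eq0.
have [t t0 te] : exists2 t, t != 0 & t ^+ q = y / x * t.
  by apply: normq_eq1; apply: (mulIf Nx0); rewrite -normqM divfK // mul1r.
by exists t; rewrite // te mulrA [x * _]mulrC divfK.
Qed.

Lemma S1_mT (u v : F) : (u != 0) || (v != 0) -> S1 q (u, v, 0) <-> normq u = normq v.
Proof.
move=> uv; rewrite -hilbert90 //.
split=> [[t [t0 /peq_mT_cross ut]] | [t t0 ut]]; first by exists t.
by exists t; split=> //; apply: peq_mT; rewrite ?t0.
Qed.

Definition fixpt (t : F) : trip F := (t, t ^+ q, t ^+ q ^+ q).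

Lemma phi_fixpt (t : F) : phi q (fixpt t) = fixpt t.
Proof. by rewrite phiE frob3. Qed.

Lemma phi3 (u : trip F) : phi q (phi q (phi q u)) = u.
Proof. by case: u => [[a b] c]; rewrite !phiE !frob3. Qed.

Lemma incid_phi (P l : trip F) : incid (phi q P) (phi q l) <-> incid P l.
Proof.
case: P l => [[x y] z] [[a b] c]; rewrite !phiE !incidE.
rewrite -!exprMn -!frobD (_ : c * z + a * x + b * y = a * x + b * y + c * z); last by ring.
by split=> [/eqP | ->]; [rewrite frob_eq0 => /eqP | rewrite frob0].
Qed.

Lemma incid_fixpt_phi (t : F) (l : trip F) : incid (fixpt t) (phi q l) <-> incid (fixpt t) l.
Proof. by rewrite -{1}phi_fixpt; apply: incid_phi. Qed.

Lemma concurrent_fixpt (t : F) (l : trip F) :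
  t != 0 -> incid (fixpt t) l -> concurrent3 l (phi q l) (phi q (phi q l)).
Proof.
move=> t0 tl; exists (fixpt t); split; first by apply/nz3E; rewrite t0.
by split=> //; split; apply/incid_fixpt_phi => //; apply/incid_fixpt_phi.
Qed.

Lemma incid_fixpt (l : trip F) (x y z t : F) : incid (T F) l ->
  x != 0 -> x * t ^+ q = y * t -> incid (x, y, z) l -> incid (fixpt t) l.
Proof.
case: l => [[m1 m2] m3]; rewrite /T /fixpt !incidE !(mulr0, mulr1, add0r) => -> x0 xt.
rewrite !(mul0r, addr0) => hP; apply: (mulfI x0); rewrite mulr0.
transitivity (t * (m1 * x + m2 * y)); last by rewrite hP mulr0.
by transitivity (m1 * x * t + m2 * (x * t ^+ q)); [ring | rewrite xt; ring].
Qed.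

Lemma det3_orbit (a b c : F) :
  det3 (a, b, c) (phi q (a, b, c)) (phi q (phi q (a, b, c)))
  = normq a + normq b + normq c
    - (a * b ^+ q * c ^+ q ^+ q + b * c ^+ q * a ^+ q ^+ q + c * a ^+ q * b ^+ q ^+ q).
Proof. by rewrite !phiE /det3 /tx /ty /tz /normq /=; ring. Qed.

Lemma phiT : phi q (T F) = (1, 0, 0).
Proof. by rewrite phiE frob0 expr1n. Qed.

Lemma phi2T : phi q (phi q (T F)) = (0, 1, 0).
Proof. by rewrite phiT phiE frob0 expr1n. Qed.

Lemma Fig_phiT (x y z : F) : Fig q (phi q (T F)) (x, y, z) -> (x != 0) || (y != 0) ->
  y != 0 /\ normq x != normq y.
Proof.
case=> [[_ [[[l1 l2] l3] [/nz3E nzl [+ [+ +]]]]] | [_ [[[a b] c] [[/nz3E nzl nc] [+ [+ +]]]]]] xy.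
  rewrite phi3 phi2T /T !incidE !(mulr0, mulr1, add0r, addr0) => l20 l30; subst l2 l3.
  rewrite !(mul0r, addr0, eqxx, orbF) in nzl *.
  move/eqP; rewrite mulf_eq0 (negbTE nzl) => /eqP x0; rewrite x0 eqxx /= in xy.
  by rewrite x0 normq0 [0 == _]eq_sym normq_eq0 xy.
move=> hX h1 h2.
have Tl2 : incid (T F) (phi q (phi q (a, b, c))).
  by rewrite -(phi3 (T F)); apply/incid_phi/incid_phi.
move: hX; rewrite phiT incidE !(mulr0, mulr1, addr0) => a0; subst a.
have y0 : y != 0.
  apply: contraTneq nzl => y0; rewrite y0 eqxx orbF in xy.
  move: h2; rewrite !phiE !frob0 incidE y0 !(mulr0, mul0r, addr0) => /eqP.
  rewrite mulf_eq0 (negbTE xy) orbF !frob_eq0 => /eqP b0.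
  move: h1; rewrite phiE incidE b0 !frob0 !(mulr0, mul0r, addr0) => /eqP.
  by rewrite mulf_eq0 (negbTE xy) orbF frob_eq0 => /eqP ->; rewrite eqxx.
split=> //; apply/eqP => /(hilbert90 xy) [t t0 xt].
have x0 : x != 0.
  by apply: contraTneq (mulf_neq0 y0 t0) => x0; rewrite -xt x0 mul0r eqxx.
apply: nc; apply: (concurrent_fixpt t0).
by have /incid_fixpt_phi/incid_fixpt_phi := incid_fixpt Tl2 x0 xt h2.
Qed.

Lemma Fig_phi2T (x y z : F) :
  Fig q (phi q (phi q (T F))) (x, y, z) -> (x != 0) || (y != 0) ->
  x != 0 /\ normq x != normq y.
Proof.
case=> [[_ [[[l1 l2] l3] [/nz3E nzl [+ [+ +]]]]] | [_ [[[a b] c] [[/nz3E nzl nc] [+ [+ +]]]]]] xy.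
  rewrite phi3 phiT /T !incidE !(mulr0, mulr1, add0r, addr0) => l30 l10; subst l1 l3.
  rewrite !(mul0r, add0r, addr0, eqxx, orbF) /= in nzl *.
  move/eqP; rewrite mulf_eq0 (negbTE nzl) => /eqP y0; rewrite y0 eqxx orbF in xy.
  by rewrite y0 normq0 normq_eq0 xy.
move=> hX h1 h2.
have Tl1 : incid (T F) (phi q (a, b, c)) by rewrite -(phi3 (T F)); apply/incid_phi.
move: hX; rewrite phi2T incidE !(mulr0, mulr1, add0r, addr0) => b0; subst b.
have x0 : x != 0.
  apply: contraTneq nzl => x0; rewrite x0 eqxx /= in xy.
  move: h1; rewrite phiE incidE x0 frob0 !(mulr0, mul0r, add0r, addr0) => /eqP.
  rewrite mulf_eq0 (negbTE xy) orbF frob_eq0 => /eqP a0.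
  move: h2; rewrite !phiE incidE a0 !frob0 !(mulr0, mul0r, add0r, addr0) => /eqP.
  by rewrite mulf_eq0 (negbTE xy) orbF !frob_eq0 => /eqP ->; rewrite eqxx.
split=> //; apply/eqP => /(hilbert90 xy) [t t0 xt].
apply: nc; apply: (concurrent_fixpt t0).
by have /incid_fixpt_phi := incid_fixpt Tl1 x0 xt h1.
Qed.

Lemma FX_phiT (x y : F) : y != 0 -> normq x != normq y ->
  FX q (phi q (T F)) (x, y, x * x ^+ q ^+ q / y ^+ q ^+ q).
Proof.
move=> y0 Nxy; split; first by apply/nz3E; rewrite y0 orbT.
exists (0, y ^+ q, - x ^+ q); split.
  apply: typeIIIline_det; rewrite det3_orbit !frob0 normq0 normqN !normq_frob.
  by rewrite !(mul0r, mulr0, add0r, addr0, subr0) subr_eq0 eq_sym.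
have yq0 : y ^+ q ^+ q != 0 by rewrite !frob_eq0.
by rewrite phiT !phiE !frobN !frob0 !frob3 !incidE; do !split; [ring | field | ring].
Qed.

Lemma FX_phi2T (x y : F) : x != 0 -> normq x != normq y ->
  FX q (phi q (phi q (T F))) (x, y, y * y ^+ q / x ^+ q).
Proof.
move=> x0 Nxy; split; first by apply/nz3E; rewrite x0.
exists (- x ^+ q ^+ q, 0, y ^+ q ^+ q); split.
  apply: typeIIIline_det; rewrite det3_orbit !frob0 normq0 normqN !normq_frob.
  by rewrite !(mul0r, mulr0, add0r, addr0, subr0) addrC subr_eq0 eq_sym.
have xq0 : x ^+ q != 0 by rewrite frob_eq0.
by rewrite phi2T !phiE !frobN !frob0 !frob3 !incidE; do !split; [ring | ring | field].
Qed.

Lemma PrFig_phiT (Q : trip F) : PrFigMinusT q (phi q (T F)) Q <->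
  exists x y, [/\ y != 0, normq x != normq y & peq (x, y, 0) Q].
Proof.
split=> [[[[x y] z] [HF [nT HPr]]] | [x [y [y0 Nxy xyQ]]]].
  have nzP : nz (x, y, z) by case: HF => [[[nzP _] _] | [nzP _]].
  have xy := (peq_T nzP).1 nT; have [y0 Nxy] := Fig_phiT HF xy.
  by exists x, y; split=> //; apply: (Pr_proj z Q xy).1 HPr.
have xy : (x != 0) || (y != 0) by rewrite y0 orbT.
exists (x, y, x * x ^+ q ^+ q / y ^+ q ^+ q); split; first by right; apply: FX_phiT.
split; last by apply/(Pr_proj _ _ xy).
by apply/peq_T => //; apply/nz3E; rewrite xy.
Qed.

Lemma PrFig_phi2T (Q : trip F) : PrFigMinusT q (phi q (phi q (T F))) Q <->
  exists x y, [/\ x != 0, normq x != normq y & peq (x, y, 0) Q].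
Proof.
split=> [[[[x y] z] [HF [nT HPr]]] | [x [y [x0 Nxy xyQ]]]].
  have nzP : nz (x, y, z) by case: HF => [[[nzP _] _] | [nzP _]].
  have xy := (peq_T nzP).1 nT; have [x0 Nxy] := Fig_phi2T HF xy.
  by exists x, y; split=> //; apply: (Pr_proj z Q xy).1 HPr.
have xy : (x != 0) || (y != 0) by rewrite x0.
exists (x, y, y * y ^+ q / x ^+ q); split; first by right; apply: FX_phi2T.
split; last by apply/(Pr_proj _ _ xy).
by apply/peq_T => //; apply/nz3E; rewrite xy.
Qed.

Lemma mTminus_phiT (Q : trip F) : mTminus q (phi q (T F)) Q <->
  exists x y, [/\ y != 0, normq x != normq y & peq (x, y, 0) Q].
Proof.
rewrite phiT; split=> [|[x [y [y0 Nxy [_ [_ [c [c0 eQ]]]]]]]].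
  case: Q => [[u v] w] [nzQ [+ [nS1 nX]]]; rewrite /mT incidE !mul0r !add0r mul1r => w0.
  subst w; have /nz3E := nzQ; rewrite eqxx orbF => uv.
  have v0 : v != 0.
    by apply/eqP => v0; apply: nX; apply: peq_mT => //; rewrite ?oner_neq0 // v0 mulr0 mul0r.
  have Nuv : normq u != normq v by apply/eqP => /(S1_mT uv).
  by exists u, v; split=> //; apply: peq_refl.
have cy0 : c * y != 0 by rewrite mulf_neq0.
have cxy : (c * x != 0) || (c * y != 0) by rewrite cy0 orbT.
have Nc : normq c != 0 by rewrite normq_eq0.
subst Q; rewrite smulE mulr0; split; first by apply/nz3E; rewrite cxy.
split; first by rewrite /mT incidE; ring.
split; last by move/peq_mT_cross/esym/eqP; rewrite mulr0 mulr1 (negbTE cy0).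
by move/(S1_mT cxy); rewrite !normqM => /(mulfI Nc)/eqP; rewrite (negbTE Nxy).
Qed.

Lemma mTminus_phi2T (Q : trip F) : mTminus q (phi q (phi q (T F))) Q <->
  exists x y, [/\ x != 0, normq x != normq y & peq (x, y, 0) Q].
Proof.
rewrite phi2T; split=> [|[x [y [x0 Nxy [_ [_ [c [c0 eQ]]]]]]]].
  case: Q => [[u v] w] [nzQ [+ [nS1 nX]]]; rewrite /mT incidE !mul0r !add0r mul1r => w0.
  subst w; have /nz3E := nzQ; rewrite eqxx orbF => uv.
  have u0 : u != 0.
    by apply/eqP => u0; apply: nX; apply: peq_mT => //; rewrite ?oner_neq0 ?orbT // u0 mulr0 mul0r.
  have Nuv : normq u != normq v by apply/eqP => /(S1_mT uv).
  by exists u, v; split=> //; apply: peq_refl.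
have cx0 : c * x != 0 by rewrite mulf_neq0.
have cxy : (c * x != 0) || (c * y != 0) by rewrite cx0.
have Nc : normq c != 0 by rewrite normq_eq0.
subst Q; rewrite smulE mulr0; split; first by apply/nz3E; rewrite cxy.
split; first by rewrite /mT incidE; ring.
split; last by move/peq_mT_cross/eqP; rewrite mulr0 mulr1 (negbTE cx0).
by move/(S1_mT cxy); rewrite !normqM => /(mulfI Nc)/eqP; rewrite (negbTE Nxy).
Qed.

End CubicExtension.

Theorem theorem6p3 (F : finFieldType) (p k : nat) :
  prime p -> (0 < k)%N -> #|F| = ((p ^ k) ^ 3)%N ->
  let q := (p ^ k)%N in
  (forall Q : trip F,
     PrFigMinusT q (phi q (T F)) Q <-> mTminus q (phi q (T F)) Q) /\
  (forall Q : trip F,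
     PrFigMinusT q (phi q (phi q (T F))) Q <->
     mTminus q (phi q (phi q (T F))) Q).
Proof.
move=> p_pr _ card_F q.
have pchar_p : p \in [pchar F] by apply: (@card_finPcharP F p (k * 3)); rewrite // expnM.
have q_pchar : [pchar F].-nat q by rewrite pnatX (pnatE _ p_pr) pchar_p.
split=> Q.
  exact: iff_trans (PrFig_phiT q_pchar card_F Q) (iff_sym (mTminus_phiT q_pchar card_F Q)).
exact: iff_trans (PrFig_phi2T q_pchar card_F Q) (iff_sym (mTminus_phi2T q_pchar card_F Q)).
Qed.
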